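(* Let $M$ be a real $N\times N$ matrix all of whose column sums $\sum_{i}M_{i,j}$ are equal, and let $\Gamma(M)=\max_j\sum_{i=1}^N|M_{i,j}|$. Then every decomposition $M=\sum_a c_a S_a$ with finitely many stochastic matrices $S_a$ and real coefficients $c_a$ satisfies $\sum_a|c_a|\ge\Gamma(M)$, and there exists such a decomposition with $\sum_a|c_a|=\Gamma(M)$.
   Context: A stochastic matrix is a real square matrix with nonnegative entries whose columns each sum to $1$. *)

From mathcomp Require Import all_boot all_order all_algebra.
From mathcomp Require Import reals.
Set Implicit Arguments. Unset Strict Implicit. Unset Printing Implicit Defensive.
Import Order.TTheory GRing.Theory Num.Theory.
Local Open Scope ring_scope.

Definition stochastic (R : realType) (N : nat) (S : 'M[R]_N) : Prop :=
  (forall i j, 0 <= S i j) /\ (forall j, \sum_(i < N) S i j = 1).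

Definition equal_col_sums (R : realType) (N : nat) (M : 'M[R]_N) : Prop :=
  forall j j' : 'I_N, \sum_(i < N) M i j = \sum_(i < N) M i j'.

Definition Gamma (R : realType) (N : nat) (M : 'M[R]_N) : R :=
  \big[Num.max/0]_(j < N) \sum_(i < N) `|M i j|.

(* Lower bound: if M = \sum_a c_a S_a with every S_a stochastic, then for each
   column j the triangle inequality gives
     \sum_i |M_ij| <= \sum_a |c_a| \sum_i (S_a)_ij = \sum_a |c_a|,
   hence Gamma(M) <= \sum_a |c_a|.

   Upper bound: split M = P - Q into its entrywise positive and negative parts.
   Column j of P sums to p_j and of Q to q_j, with p_j - q_j = s and
   p_j + q_j <= Gamma(M).  Adding the same nonnegative amount
   r_j = (Gamma(M) - p_j - q_j) / 2 to row 0 of column j of both P and Q yields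
   nonnegative matrices with constant column sums (Gamma(M) + s) / 2 and
   (Gamma(M) - s) / 2; rescaled, they are stochastic matrices A and B, and
   M = (Gamma(M) + s)/2 A - (Gamma(M) - s)/2 B has coefficient norm Gamma(M). *)

From mathcomp Require Import all_boot all_order all_algebra.
From mathcomp Require Import reals.
From mathcomp Require Import ring.
Set Implicit Arguments. Unset Strict Implicit. Unset Printing Implicit Defensive.
Import Order.TTheory GRing.Theory Num.Theory.
Local Open Scope ring_scope.

Section PositiveNegativeParts.
Variable R : realDomainType.
Implicit Types x : R.

Definition pos_part x : R := Num.max x 0.
Definition neg_part x : R := Num.max (- x) 0.

Lemma pos_part_ge0 x : 0 <= pos_part x.
Proof. by rewrite /pos_part le_max lexx orbT. Qed.

Lemma neg_part_ge0 x : 0 <= neg_part x.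
Proof. by rewrite /neg_part le_max lexx orbT. Qed.

Lemma pos_sub_neg_part x : pos_part x - neg_part x = x.
Proof.
rewrite /pos_part /neg_part; case: (lerP 0 x) => hx.
- by rewrite max_r ?subr0 // oppr_le0.
- by rewrite max_l ?sub0r ?opprK // oppr_ge0 ltW.
Qed.

Lemma pos_add_neg_part x : pos_part x + neg_part x = `|x|.
Proof.
rewrite /pos_part /neg_part; case: (lerP 0 x) => hx.
- by rewrite max_r ?addr0 ?ger0_norm // oppr_le0.
- by rewrite max_l ?add0r ?ltr0_norm // oppr_ge0 ltW.
Qed.

End PositiveNegativeParts.

Section ColumnSums.
Variables (R : realType) (N : nat).
Implicit Types (M : 'M[R]_N) (j : 'I_N).

Definition col_sum M j : R := \sum_i M i j.

Lemma col_sumD M M' j : col_sum (M + M') j = col_sum M j + col_sum M' j.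
Proof. by rewrite /col_sum -big_split; apply: eq_bigr => i _; rewrite mxE. Qed.

Lemma col_norm_le_Gamma M j : \sum_i `|M i j| <= Gamma M.
Proof. exact: (le_bigmax _ (fun j => \sum_i `|M i j|) j). Qed.

Lemma Gamma_le M x :
  0 <= x -> (forall j, \sum_i `|M i j| <= x) -> Gamma M <= x.
Proof. by move=> x_ge0 hcol; apply/bigmax_leP. Qed.

Lemma col_norm_combination_le k (c : 'I_k -> R) (S : 'I_k -> 'M[R]_N) j :
  (forall a, stochastic (S a)) ->
  \sum_i `|(\sum_(a < k) c a *: S a) i j| <= \sum_(a < k) `|c a|.
Proof.
move=> hS.
have entry_le i : `|(\sum_(a < k) c a *: S a) i j| <= \sum_a `|c a| * S a i j.
  rewrite summxE; apply: le_trans (ler_norm_sum _ _ _) _.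
  by apply: ler_sum => a _; rewrite mxE normrM (ger0_norm ((hS a).1 i j)).
apply: le_trans (ler_sum _ (fun i _ => entry_le i)) _.
rewrite exchange_big /=; apply: ler_sum => a _.
by rewrite -mulr_sumr (hS a).2 mulr1.
Qed.

Lemma Gamma_combination_le k (c : 'I_k -> R) (S : 'I_k -> 'M[R]_N) :
  (forall a, stochastic (S a)) ->
  Gamma (\sum_(a < k) c a *: S a) <= \sum_(a < k) `|c a|.
Proof.
move=> hS; apply: Gamma_le; first by apply: sumr_ge0 => a _.
by move=> j; exact: col_norm_combination_le.
Qed.

End ColumnSums.

Section TwoTermDecomposition.
Variables (R : realType) (n : nat).
Implicit Types (M P : 'M[R]_n.+1) (r : 'I_n.+1 -> R).

Definition row0_mx r : 'M[R]_n.+1 := \matrix_(i, j) ((i == ord0)%:R * r j).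

Lemma col_sum_row0_mx r j : col_sum (row0_mx r) j = r j.
Proof.
rewrite /col_sum (bigD1 ord0) //= big1 ?mxE ?eqxx ?mul1r ?addr0 //.
by move=> i /negPf i_neq0; rewrite mxE i_neq0 mul0r.
Qed.

Lemma row0_mx_ge0 r : (forall j, 0 <= r j) -> forall i j, 0 <= row0_mx r i j.
Proof. by move=> r_ge0 i j; rewrite mxE mulr_ge0 ?ler0n. Qed.

Lemma row0_mx_stochastic : stochastic (row0_mx (fun=> 1)).
Proof. by split; [exact: row0_mx_ge0 | move=> j; exact: col_sum_row0_mx]. Qed.

(* A nonnegative matrix whose columns all sum to t is t times a stochastic
   matrix (for t = 0 the matrix vanishes and any stochastic matrix works). *)
Lemma scaled_stochastic P t :
  (forall i j, 0 <= P i j) -> (forall j, col_sum P j = t) ->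
  exists A, stochastic A /\ P = t *: A.
Proof.
move=> P_ge0 hcol; have [t0|t_neq0] := eqVneq t 0.
  exists (row0_mx (fun=> 1)); split; first exact: row0_mx_stochastic.
  rewrite t0 scale0r; apply/matrixP => i j; rewrite mxE.
  have col0 : \sum_k P k j = 0 by move: (hcol j); rewrite t0.
  exact: (psumr_eq0P (fun k _ => P_ge0 k j) col0).
have t_gt0 : 0 < t.
  by rewrite lt0r t_neq0 -(hcol ord0) sumr_ge0 // => i _.
exists (t^-1 *: P); split; last by rewrite scalerA divff // scale1r.
split=> [i j|j]; first by rewrite mxE mulr_ge0 // invr_ge0 ltW.
rewrite /col_sum; under eq_bigr do rewrite mxE.
by rewrite -mulr_sumr -/(col_sum P j) hcol mulVf.
Qed.

Lemma two_term_decomposition M : equal_col_sums M ->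
  exists A B (al be : R), [/\ stochastic A, stochastic B, 0 <= al /\ 0 <= be,
    al + be = Gamma M & M = al *: A - be *: B].
Proof.
move=> heq; set G := Gamma M; set s := col_sum M ord0.
pose P := map_mx (@pos_part R) M; pose Q := map_mx (@neg_part R) M.
have P_ge0 i j : 0 <= P i j by rewrite mxE pos_part_ge0.
have Q_ge0 i j : 0 <= Q i j by rewrite mxE neg_part_ge0.
have sub_col j : col_sum P j - col_sum Q j = s.
  rewrite /s /col_sum (heq ord0 j) -sumrB.
  by apply: eq_bigr => i _; rewrite !mxE pos_sub_neg_part.
have add_col j : col_sum P j + col_sum Q j <= G.
  rewrite /col_sum -big_split /=.
  under eq_bigr do rewrite !mxE pos_add_neg_part.
  exact: col_norm_le_Gamma.
(* The common padding that raises the column sums of P and Q to al and be. *)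
pose r j := (G - (col_sum P j + col_sum Q j)) / 2.
have r_ge0 j : 0 <= r j by rewrite divr_ge0 // subr_ge0.
pose al := (G + s) / 2; pose be := (G - s) / 2.
have colP j : col_sum (P + row0_mx r) j = al.
  by rewrite col_sumD col_sum_row0_mx /al -(sub_col j) /r; field.
have colQ j : col_sum (Q + row0_mx r) j = be.
  by rewrite col_sumD col_sum_row0_mx /be -(sub_col j) /r; field.
have padded_ge0 (X : 'M[R]_n.+1) : (forall i j, 0 <= X i j) ->
    forall i j, 0 <= (X + row0_mx r) i j.
  by move=> X_ge0 i j; rewrite mxE addr_ge0 ?row0_mx_ge0.
have [A [A_st eA]] := scaled_stochastic (padded_ge0 _ P_ge0) colP.
have [B [B_st eB]] := scaled_stochastic (padded_ge0 _ Q_ge0) colQ.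
exists A, B, al, be; split=> //.
- split.
  + by rewrite -(colP ord0) sumr_ge0 // => i _; exact: padded_ge0.
  + by rewrite -(colQ ord0) sumr_ge0 // => i _; exact: padded_ge0.
- by rewrite /al /be; field.
- rewrite -eA -eB; apply/matrixP => i j.
  by rewrite !mxE opprD addrACA subrr addr0 pos_sub_neg_part.
Qed.

End TwoTermDecomposition.

Theorem mainTheorem4 (R : realType) (N : nat) (M : 'M[R]_N) :
  equal_col_sums M ->
  (forall (k : nat) (c : 'I_k -> R) (S : 'I_k -> 'M[R]_N),
      (forall a, stochastic (S a)) ->
      M = \sum_(a < k) c a *: S a ->
      Gamma M <= \sum_(a < k) `|c a|)
  /\
  (exists (k : nat) (c : 'I_k -> R) (S : 'I_k -> 'M[R]_N),
      (forall a, stochastic (S a)) /\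
      M = \sum_(a < k) c a *: S a /\
      \sum_(a < k) `|c a| = Gamma M).
Proof.
move=> heq; split=> [k c S hS ->|]; first exact: Gamma_combination_le.
case: N M heq => [|n] M heq.
  exists 0%N, (fun=> 0), (fun=> 0); split; first by case.
  split; first by rewrite big_ord0; apply/matrixP => [[]].
  by rewrite big_ord0 /Gamma big_ord0.
have [A [B [al [be [A_st B_st [al_ge0 be_ge0] sumG eM]]]]] :=
  two_term_decomposition heq.
exists 2%N, (fun a => if a == ord0 then al else - be),
  (fun a => if a == ord0 then A else B).
split; first by move=> a; case: ifP.
rewrite !big_ord_recr !big_ord0 /= !add0r; split; first by rewrite eM scaleNr.
by rewrite normrN !ger0_norm.
Qed.
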